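(* Let $\gamma:[0,l]\times[0,w)\to E_1^4$, $(s,t)\mapsto\gamma(s,t)$, be a smooth inextensible one-parameter family of partially null curves in $E_1^4$ parametrized by arclength ($\|\partial\gamma/\partial s\|\equiv1$), with Frenet frame $\{T,N,B_1,B_2\}$, curvatures $k_1,k_2$ (and $k_3\equiv0$), and write $$\frac{\partial\gamma}{\partial t}=\beta_1T+\beta_2N+\beta_3B_1+\beta_4B_2$$ with smooth scalar functions $\beta_i$. Put $\psi_1=\langle\frac{\partial N}{\partial t},B_1\rangle$ and $\psi_2=\langle\frac{\partial N}{\partial t},B_2\rangle$. Then, at points where $\psi_1\neq0$, $$k_1=\frac{1}{\psi_1}\frac{\partial^2\beta_4}{\partial s^2},$$ and $$\frac{\partial^2\beta_3}{\partial s^2}+\frac{\partial(\beta_2k_2)}{\partial s}+\frac{\partial\beta_2}{\partial s}k_2+\beta_1k_1k_2-\beta_4k_2^2-\psi_2k_1=0.$$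
   Context: $E_1^4$ is $\mathbb{R}^4$ with the Lorentzian metric $\langle x,y\rangle=-x_1y_1+x_2y_2+x_3y_3+x_4y_4$ and $\|x\|=\sqrt{|\langle x,x\rangle|}$. A partially null curve is a spacelike curve whose first binormal is a null vector. For such a curve parametrized by arclength $s$, its Frenet frame $\{T,N,B_1,B_2\}$ ($T=\partial\gamma/\partial s$) satisfies $\langle T,T\rangle=\langle N,N\rangle=1$, $\langle B_1,B_1\rangle=\langle B_2,B_2\rangle=0$, $\langle B_1,B_2\rangle=1$, all other inner products zero, and the Frenet equations $T'=k_1N$, $N'=-k_1T+k_2B_1$, $B_1'=k_3B_1$, $B_2'=-k_2N-k_3B_2$, with $k_3\equiv0$. In the family, each $s\mapsto\gamma(s,t)$ is such a curve and frame and curvatures are smooth in $(s,t)$. The flow is inextensible if $\frac{\partial}{\partial t}\|\partial\gamma/\partial u\|=0$. *)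

From Stdlib Require Import Reals Lra.
From Coquelicot Require Import Coquelicot.
Open Scope R_scope.

Record V4 := mkV4 { x1 : R ; x2 : R ; x3 : R ; x4 : R }.

Definition lor (x y : V4) : R :=
  - x1 x * x1 y + x2 x * x2 y + x3 x * x3 y + x4 x * x4 y.
Definition lnorm (x : V4) : R := sqrt (Rabs (lor x x)).

Definition lin4 (a b c d : R) (X Y Z W : V4) : V4 :=
  mkV4 (a * x1 X + b * x1 Y + c * x1 Z + d * x1 W)
       (a * x2 X + b * x2 Y + c * x2 Z + d * x2 W)
       (a * x3 X + b * x3 Y + c * x3 Z + d * x3 W)
       (a * x4 X + b * x4 Y + c * x4 Z + d * x4 W).

Definition vscale (a : R) (X : V4) : V4 :=
  mkV4 (a * x1 X) (a * x2 X) (a * x3 X) (a * x4 X).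
Definition vzero : V4 := mkV4 0 0 0 0.

Definition d_s (f : R -> R -> R) : R -> R -> R :=
  fun s t => Derive (fun u => f u t) s.
Definition d_t (f : R -> R -> R) : R -> R -> R :=
  fun s t => Derive (fun v => f s v) t.

Definition vd_s (F : R -> R -> V4) : R -> R -> V4 :=
  fun s t => mkV4 (d_s (fun a b => x1 (F a b)) s t) (d_s (fun a b => x2 (F a b)) s t)
                  (d_s (fun a b => x3 (F a b)) s t) (d_s (fun a b => x4 (F a b)) s t).
Definition vd_t (F : R -> R -> V4) : R -> R -> V4 :=
  fun s t => mkV4 (d_t (fun a b => x1 (F a b)) s t) (d_t (fun a b => x2 (F a b)) s t)
                  (d_t (fun a b => x3 (F a b)) s t) (d_t (fun a b => x4 (F a b)) s t).

Definition pd (b : bool) (f : R -> R -> R) : R -> R -> R :=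
  if b then d_s f else d_t f.
Definition pds (l : list bool) (f : R -> R -> R) : R -> R -> R :=
  List.fold_right pd f l.

(* f is C^infinity on a neighbourhood of (s,t): every iterated partial
   derivative exists (in both directions) and is jointly continuous near (s,t). *)
Definition smooth_at (f : R -> R -> R) (s t : R) : Prop :=
  forall l : list bool,
    locally ((s, t) : R * R) (fun q : R * R =>
      ex_derive (fun u => pds l f u (snd q)) (fst q) /\
      ex_derive (fun v => pds l f (fst q) v) (snd q) /\
      continuous (fun p : R * R => pds l f (fst p) (snd p)) q).

Definition vsmooth_at (F : R -> R -> V4) (s t : R) : Prop :=
  smooth_at (fun a b => x1 (F a b)) s t /\ smooth_at (fun a b => x2 (F a b)) s t /\
  smooth_at (fun a b => x3 (F a b)) s t /\ smooth_at (fun a b => x4 (F a b)) s t.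

Definition rect (l w s t : R) : Prop := 0 <= s <= l /\ 0 <= t < w.

(* Write V = d gamma / dt = beta1 T + beta2 N + beta3 B1 + beta4 B2.  Since d T / dt = d V / ds
   by Schwarz, differentiating the coordinates beta4 = <V, B1>, beta3 = <V, B2>, beta2 = <V, N>
   along the curve and using the Frenet equations gives <dT/dt, B1> = beta4', <dT/dt, B2> =
   beta3' + beta2 k2 and <dT/dt, N> = beta2' + k1 beta1 - k2 beta4.  Differentiating the first
   two once more, with d/ds (dT/dt) = d/dt (k1 N) = k1_t N + k1 dN/dt, B1' = 0, B2' = -k2 N and
   N orthogonal to B1, B2, yields beta4'' = k1 psi1 and the second identity.  All hypotheses hold only on [0,l] x [0,w), so derivatives are compared through
   functions agreeing on a segment, one-sided at the boundary. *)
From Stdlib Require Import Reals Lra List.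
From Coquelicot Require Import Coquelicot.
Open Scope R_scope.

Lemma Derive_ext_segment (f g : R -> R) (a b x : R) :
  a < b -> a <= x <= b -> ex_derive f x -> ex_derive g x ->
  (forall y, a <= y <= b -> f y = g y) -> Derive f x = Derive g x.
Proof.
  intros Hab Hx Hf Hg Heq.
  assert (Hd : is_derive (fun y => f y - g y) x (Derive f x - Derive g x)).
  { apply (is_derive_minus f g); apply Derive_correct; assumption. }
  apply is_derive_Reals in Hd.
  set (D := Derive f x - Derive g x) in *.
  destruct (Req_dec D 0) as [HD | HD]; [unfold D in HD; lra | exfalso].
  assert (HD2 : 0 < Rabs D / 2) by (generalize (Rabs_pos_lt D HD); lra).
  destruct (Hd _ HD2) as [del Hdel].
  assert (Hdel_pos := cond_pos del).
  (* on the segment the difference quotient of f - g vanishes, contradicting D <> 0 *)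
  assert (Hstep : forall h, h <> 0 -> Rabs h < del -> a <= x + h <= b -> False).
  { intros h Hh0 Hhdel Hxh. specialize (Hdel h Hh0 Hhdel).
    rewrite (Heq (x + h) Hxh), (Heq x Hx) in Hdel.
    replace ((g (x + h) - g (x + h) - (g x - g x)) / h - D) with (- D) in Hdel
      by (field; assumption).
    rewrite Rabs_Ropp in Hdel. generalize (Rabs_pos_lt D HD); lra. }
  destruct (Rlt_or_le x b) as [Hxb | Hxb].
  - apply (Hstep (Rmin (del / 2) (b - x))); unfold Rmin; destruct Rle_dec;
      try rewrite Rabs_pos_eq; lra.
  - apply (Hstep (- Rmin (del / 2) (x - a))); unfold Rmin; destruct Rle_dec;
      try rewrite Rabs_Ropp, Rabs_pos_eq; lra.
Qed.

Lemma d_s_ext_segment (f g : R -> R -> R) (a b s t : R) :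
  a < b -> a <= s <= b -> ex_derive (fun u => f u t) s -> ex_derive (fun u => g u t) s ->
  (forall u, a <= u <= b -> f u t = g u t) -> d_s f s t = d_s g s t.
Proof. intros. apply (Derive_ext_segment _ _ a b); assumption. Qed.

Lemma pds_app (l l' : list bool) (f : R -> R -> R) : pds (l ++ l') f = pds l (pds l' f).
Proof. apply fold_right_app. Qed.

Lemma smooth_at_d_s (f : R -> R -> R) (s t : R) : smooth_at f s t -> smooth_at (d_s f) s t.
Proof. intros H l. specialize (H (l ++ true :: nil)). rewrite pds_app in H. exact H. Qed.

Lemma smooth_at_d_t (f : R -> R -> R) (s t : R) : smooth_at f s t -> smooth_at (d_t f) s t.
Proof. intros H l. specialize (H (l ++ false :: nil)). rewrite pds_app in H. exact H. Qed.

Lemma smooth_at_ex_derive (f : R -> R -> R) (s t : R) :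
  smooth_at f s t -> ex_derive (fun u => f u t) s /\ ex_derive (fun v => f s v) t.
Proof. intros H. destruct (locally_singleton _ _ (H nil)) as [Hs [Ht _]]. split; assumption. Qed.

Lemma d_s_d_t_comm (f : R -> R -> R) (s t : R) :
  smooth_at f s t -> d_s (d_t f) s t = d_t (d_s f) s t.
Proof.
  intros H. unfold d_s, d_t. apply Schwarz.
  - apply locally_2d_locally.
    generalize (filter_and _ _ (H nil)
      (filter_and _ _ (H (false :: nil)) (H (true :: nil)))).
    apply filter_imp. intros q [[Hs [Ht _]] [[Hts _] [_ [Hst _]]]]. simpl in *. tauto.
  - apply continuity_2d_pt_filterlim.
    exact (proj2 (proj2 (locally_singleton _ _ (H (true :: false :: nil))))).
  - apply continuity_2d_pt_filterlim.
    exact (proj2 (proj2 (locally_singleton _ _ (H (false :: true :: nil))))).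
Qed.

Definition ex_vd_s (F : R -> R -> V4) (s t : R) : Prop :=
  ex_derive (fun u => x1 (F u t)) s /\ ex_derive (fun u => x2 (F u t)) s /\
  ex_derive (fun u => x3 (F u t)) s /\ ex_derive (fun u => x4 (F u t)) s.

Definition ex_vd_t (F : R -> R -> V4) (s t : R) : Prop :=
  ex_derive (fun v => x1 (F s v)) t /\ ex_derive (fun v => x2 (F s v)) t /\
  ex_derive (fun v => x3 (F s v)) t /\ ex_derive (fun v => x4 (F s v)) t.

Lemma vsmooth_at_vd_s (F : R -> R -> V4) (s t : R) : vsmooth_at F s t -> vsmooth_at (vd_s F) s t.
Proof. intros (H1 & H2 & H3 & H4). repeat split; apply smooth_at_d_s; assumption. Qed.

Lemma vsmooth_at_vd_t (F : R -> R -> V4) (s t : R) : vsmooth_at F s t -> vsmooth_at (vd_t F) s t.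
Proof. intros (H1 & H2 & H3 & H4). repeat split; apply smooth_at_d_t; assumption. Qed.

Lemma vsmooth_at_ex_vd (F : R -> R -> V4) (s t : R) :
  vsmooth_at F s t -> ex_vd_s F s t /\ ex_vd_t F s t.
Proof.
  intros (H1 & H2 & H3 & H4).
  apply smooth_at_ex_derive in H1, H2, H3, H4. unfold ex_vd_s, ex_vd_t. tauto.
Qed.

Lemma vd_s_vd_t_comm (F : R -> R -> V4) (s t : R) :
  vsmooth_at F s t -> vd_s (vd_t F) s t = vd_t (vd_s F) s t.
Proof.
  intros (H1 & H2 & H3 & H4). unfold vd_s, vd_t. cbn [x1 x2 x3 x4].
  f_equal; apply d_s_d_t_comm; assumption.
Qed.

Lemma vd_t_ext_right (F G : R -> R -> V4) (s t c : R) :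
  t < c -> ex_vd_t F s t -> ex_vd_t G s t ->
  (forall v, t <= v <= c -> F s v = G s v) -> vd_t F s t = vd_t G s t.
Proof.
  intros Hc (F1 & F2 & F3 & F4) (G1 & G2 & G3 & G4) Heq. unfold vd_t, d_t.
  f_equal; apply (Derive_ext_segment _ _ t c); try lra; try assumption;
    intros v Hv; rewrite (Heq v Hv); reflexivity.
Qed.

Lemma vd_t_vscale (k : R -> R -> R) (F : R -> R -> V4) (s t : R) :
  ex_derive (fun v => k s v) t -> ex_vd_t F s t ->
  vd_t (fun a b => vscale (k a b) (F a b)) s t =
  lin4 (d_t k s t) (k s t) 0 0 (F s t) (vd_t F s t) vzero vzero.
Proof.
  intros Hk (F1 & F2 & F3 & F4). unfold vd_t, lin4, d_t; cbn [x1 x2 x3 x4 vscale vzero].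
  (* [Derive_mult] leaves an eta-reduced [Derive (k s) t], a separate atom for [ring] *)
  f_equal; rewrite Derive_mult by assumption;
    change (Derive (k s) t) with (Derive (fun v => k s v) t); ring.
Qed.

Lemma is_derive_lor (f g : R -> V4) (x : R) (df dg : V4) :
  is_derive (fun u => x1 (f u)) x (x1 df) -> is_derive (fun u => x2 (f u)) x (x2 df) ->
  is_derive (fun u => x3 (f u)) x (x3 df) -> is_derive (fun u => x4 (f u)) x (x4 df) ->
  is_derive (fun u => x1 (g u)) x (x1 dg) -> is_derive (fun u => x2 (g u)) x (x2 dg) ->
  is_derive (fun u => x3 (g u)) x (x3 dg) -> is_derive (fun u => x4 (g u)) x (x4 dg) ->
  is_derive (fun u => lor (f u) (g u)) x (lor df (g x) + lor (f x) dg).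
Proof.
  intros F1 F2 F3 F4 G1 G2 G3 G4.
  pose proof (is_derive_plus _ _ _ _ _ (is_derive_plus _ _ _ _ _ (is_derive_plus _ _ _ _ _
    (is_derive_opp _ _ _ (is_derive_mult _ _ _ _ _ F1 G1 Rmult_comm))
    (is_derive_mult _ _ _ _ _ F2 G2 Rmult_comm))
    (is_derive_mult _ _ _ _ _ F3 G3 Rmult_comm))
    (is_derive_mult _ _ _ _ _ F4 G4 Rmult_comm)) as H.
  match type of H with is_derive _ _ ?v =>
    replace (lor df (g x) + lor (f x) dg) with (v : R)
      by (unfold lor, plus, opp, mult; simpl; ring) end.
  refine (is_derive_ext _ _ _ _ _ H). intros u. unfold lor, plus, opp, mult; simpl; ring.
Qed.

Lemma d_s_lor (F G : R -> R -> V4) (s t : R) :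
  ex_vd_s F s t -> ex_vd_s G s t ->
  ex_derive (fun u => lor (F u t) (G u t)) s /\
  d_s (fun a b => lor (F a b) (G a b)) s t = lor (vd_s F s t) (G s t) + lor (F s t) (vd_s G s t).
Proof.
  intros (F1 & F2 & F3 & F4) (G1 & G2 & G3 & G4).
  assert (H : is_derive (fun u => lor (F u t) (G u t)) s
                (lor (vd_s F s t) (G s t) + lor (F s t) (vd_s G s t)))
    by (apply (is_derive_lor (fun u => F u t) (fun u => G u t));
        apply Derive_correct; assumption).
  split; [eexists; exact H | exact (is_derive_unique _ _ _ H)].
Qed.

Lemma d_s_lor_segment (V X : R -> R -> V4) (f : R -> R -> R) (a b s t : R) :
  a < b -> a <= s <= b -> ex_vd_s V s t -> ex_vd_s X s t -> ex_derive (fun u => f u t) s ->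
  (forall u, a <= u <= b -> lor (V u t) (X u t) = f u t) ->
  d_s f s t = lor (vd_s V s t) (X s t) + lor (V s t) (vd_s X s t).
Proof.
  intros Hab Hs HV HX Hf Heq. destruct (d_s_lor V X s t HV HX) as [Hex Hd].
  rewrite <- Hd. apply (d_s_ext_segment _ _ a b); try assumption.
  intros u Hu. symmetry. exact (Heq u Hu).
Qed.

Lemma lor_lin4 (a b c d : R) (X Y Z W U : V4) :
  lor (lin4 a b c d X Y Z W) U = a * lor X U + b * lor Y U + c * lor Z U + d * lor W U.
Proof. unfold lor, lin4; simpl; ring. Qed.

Lemma lor_sym (X Y : V4) : lor X Y = lor Y X.
Proof. unfold lor; ring. Qed.

Lemma lor_vscale (a : R) (X Y : V4) : lor X (vscale a Y) = a * lor X Y.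
Proof. unfold lor, vscale; simpl; ring. Qed.

Lemma lor_vzero_r (X : V4) : lor X vzero = 0.
Proof. unfold lor, vzero; simpl; ring. Qed.

Lemma lor_vzero_l (X : V4) : lor vzero X = 0.
Proof. unfold lor, vzero; simpl; ring. Qed.

(* in a partially null frame, B1 and B2 pick out each other's coefficients *)
Lemma lor_lin4_frame (a b c d : R) (T N B1 B2 : V4) :
  lor T T = 1 -> lor N N = 1 -> lor B1 B1 = 0 -> lor B2 B2 = 0 -> lor B1 B2 = 1 ->
  lor T N = 0 -> lor T B1 = 0 -> lor T B2 = 0 -> lor N B1 = 0 -> lor N B2 = 0 ->
  let V := lin4 a b c d T N B1 B2 in
  lor V T = a /\ lor V N = b /\ lor V B1 = d /\ lor V B2 = c.
Proof.
  intros HTT HNN HB1B1 HB2B2 HB1B2 HTN HTB1 HTB2 HNB1 HNB2 V. unfold V. rewrite !lor_lin4.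
  rewrite (lor_sym N T), (lor_sym B1 T), (lor_sym B2 T), (lor_sym B1 N), (lor_sym B2 N),
    (lor_sym B2 B1), HTT, HNN, HB1B1, HB2B2, HB1B2, HTN, HTB1, HTB2, HNB1, HNB2.
  repeat split; ring.
Qed.

Lemma rect_right (l w s t : R) :
  rect l w s t -> exists c, t < c /\ forall v, t <= v <= c -> rect l w s v.
Proof.
  intros [Hs Ht]. exists ((t + w) / 2). split; [lra |].
  intros v Hv. split; lra.
Qed.

Section PartiallyNullVariation.

Context {l w : R} {gamma T N B1 B2 : R -> R -> V4}
  {k1 k2 beta1 beta2 beta3 beta4 : R -> R -> R}.

Hypothesis hl : 0 < l.
Hypothesis Hsm : forall s t, rect l w s t ->
  vsmooth_at gamma s t /\ vsmooth_at T s t /\ vsmooth_at N s t /\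
  vsmooth_at B1 s t /\ vsmooth_at B2 s t /\
  smooth_at k1 s t /\ smooth_at k2 s t /\
  smooth_at beta1 s t /\ smooth_at beta2 s t /\
  smooth_at beta3 s t /\ smooth_at beta4 s t.
Hypothesis HT : forall s t, rect l w s t -> vd_s gamma s t = T s t.
Hypothesis HTT : forall s t, rect l w s t -> lor (T s t) (T s t) = 1.
Hypothesis HNN : forall s t, rect l w s t -> lor (N s t) (N s t) = 1.
Hypothesis HB1B1 : forall s t, rect l w s t -> lor (B1 s t) (B1 s t) = 0.
Hypothesis HB2B2 : forall s t, rect l w s t -> lor (B2 s t) (B2 s t) = 0.
Hypothesis HB1B2 : forall s t, rect l w s t -> lor (B1 s t) (B2 s t) = 1.
Hypothesis HTN : forall s t, rect l w s t -> lor (T s t) (N s t) = 0.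
Hypothesis HTB1 : forall s t, rect l w s t -> lor (T s t) (B1 s t) = 0.
Hypothesis HTB2 : forall s t, rect l w s t -> lor (T s t) (B2 s t) = 0.
Hypothesis HNB1 : forall s t, rect l w s t -> lor (N s t) (B1 s t) = 0.
Hypothesis HNB2 : forall s t, rect l w s t -> lor (N s t) (B2 s t) = 0.
Hypothesis HFT : forall s t, rect l w s t -> vd_s T s t = vscale (k1 s t) (N s t).
Hypothesis HFN : forall s t, rect l w s t ->
  vd_s N s t = lin4 (- k1 s t) 0 (k2 s t) 0 (T s t) (N s t) (B1 s t) (B2 s t).
Hypothesis HFB1 : forall s t, rect l w s t -> vd_s B1 s t = vzero.
Hypothesis HFB2 : forall s t, rect l w s t -> vd_s B2 s t = vscale (- k2 s t) (N s t).
Hypothesis Hvar : forall s t, rect l w s t ->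
  vd_t gamma s t =
  lin4 (beta1 s t) (beta2 s t) (beta3 s t) (beta4 s t) (T s t) (N s t) (B1 s t) (B2 s t).

Lemma rect_segment (s t u : R) : rect l w s t -> 0 <= u <= l -> rect l w u t.
Proof. intros [_ Ht] Hu. split; assumption. Qed.

Lemma variation_coords (s t : R) : rect l w s t ->
  lor (vd_t gamma s t) (T s t) = beta1 s t /\ lor (vd_t gamma s t) (N s t) = beta2 s t /\
  lor (vd_t gamma s t) (B1 s t) = beta4 s t /\ lor (vd_t gamma s t) (B2 s t) = beta3 s t.
Proof. intros H. rewrite (Hvar s t H). apply lor_lin4_frame; auto. Qed.

Lemma vd_t_T (s t : R) : rect l w s t -> vd_t T s t = vd_s (vd_t gamma) s t.
Proof.
  intros H. destruct (rect_right l w s t H) as (c & Hc & Hright).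
  destruct (Hsm s t H) as (Hg & HTs & _).
  rewrite vd_s_vd_t_comm by exact Hg.
  apply (vd_t_ext_right _ _ s t c Hc).
  - exact (proj2 (vsmooth_at_ex_vd _ _ _ HTs)).
  - exact (proj2 (vsmooth_at_ex_vd _ _ _ (vsmooth_at_vd_s _ _ _ Hg))).
  - intros v Hv. symmetry. exact (HT s v (Hright v Hv)).
Qed.

Lemma lor_vd_t_T_frame (s t : R) (X : R -> R -> V4) (f : R -> R -> R) :
  rect l w s t -> vsmooth_at X s t -> smooth_at f s t ->
  (forall u v, rect l w u v -> lor (vd_t gamma u v) (X u v) = f u v) ->
  lor (vd_t T s t) (X s t) = d_s f s t - lor (vd_t gamma s t) (vd_s X s t).
Proof.
  intros H HX Hf Hcoord. destruct (Hsm s t H) as (Hg & _).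
  rewrite (vd_t_T s t H).
  rewrite (d_s_lor_segment (vd_t gamma) X f 0 l s t hl); [ring | apply H | | | |].
  - exact (proj1 (vsmooth_at_ex_vd _ _ _ (vsmooth_at_vd_t _ _ _ Hg))).
  - exact (proj1 (vsmooth_at_ex_vd _ _ _ HX)).
  - exact (proj1 (smooth_at_ex_derive _ _ _ Hf)).
  - intros u Hu. exact (Hcoord u t (rect_segment s t u H Hu)).
Qed.

Lemma lor_vd_t_T_B1 (s t : R) : rect l w s t -> lor (vd_t T s t) (B1 s t) = d_s beta4 s t.
Proof.
  intros H. destruct (Hsm s t H) as (_ & _ & _ & HB1s & _ & _ & _ & _ & _ & _ & Hb4).
  rewrite (lor_vd_t_T_frame s t B1 beta4 H HB1s Hb4)
    by (intros; apply variation_coords; assumption).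
  rewrite (HFB1 s t H), lor_vzero_r. ring.
Qed.

Lemma lor_vd_t_T_B2 (s t : R) : rect l w s t ->
  lor (vd_t T s t) (B2 s t) = d_s beta3 s t + beta2 s t * k2 s t.
Proof.
  intros H. destruct (Hsm s t H) as (_ & _ & _ & _ & HB2s & _ & _ & _ & _ & Hb3 & _).
  rewrite (lor_vd_t_T_frame s t B2 beta3 H HB2s Hb3)
    by (intros; apply variation_coords; assumption).
  rewrite (HFB2 s t H), lor_vscale, (proj1 (proj2 (variation_coords s t H))). ring.
Qed.

Lemma lor_vd_t_T_N (s t : R) : rect l w s t ->
  lor (vd_t T s t) (N s t) = d_s beta2 s t + k1 s t * beta1 s t - k2 s t * beta4 s t.
Proof.
  intros H. destruct (Hsm s t H) as (_ & _ & HNs & _ & _ & _ & _ & _ & Hb2 & _).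
  rewrite (lor_vd_t_T_frame s t N beta2 H HNs Hb2) by (intros; apply variation_coords; assumption).
  destruct (variation_coords s t H) as (V1 & V2 & V3 & V4).
  rewrite (HFN s t H), (lor_sym (vd_t gamma s t)), lor_lin4, !(lor_sym _ (vd_t gamma s t)),
    V1, V2, V3, V4. ring.
Qed.

Lemma vd_s_vd_t_T (s t : R) : rect l w s t ->
  vd_s (vd_t T) s t = lin4 (d_t k1 s t) (k1 s t) 0 0 (N s t) (vd_t N s t) vzero vzero.
Proof.
  intros H. destruct (rect_right l w s t H) as (c & Hc & Hright).
  destruct (Hsm s t H) as (_ & HTs & HNs & _ & _ & Hk1 & _).
  destruct (vsmooth_at_ex_vd _ _ _ HNs) as [_ (N1 & N2 & N3 & N4)].
  assert (Hk1t := proj2 (smooth_at_ex_derive _ _ _ Hk1)).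
  rewrite vd_s_vd_t_comm by exact HTs.
  rewrite (vd_t_ext_right (vd_s T) (fun a b => vscale (k1 a b) (N a b)) s t c Hc).
  - apply vd_t_vscale; [exact Hk1t | repeat split; assumption].
  - exact (proj2 (vsmooth_at_ex_vd _ _ _ (vsmooth_at_vd_s _ _ _ HTs))).
  - repeat split; apply ex_derive_mult; assumption.
  - intros v Hv. exact (HFT s v (Hright v Hv)).
Qed.

Lemma d_s_lor_vd_t_T (s t : R) (X : R -> R -> V4) (f : R -> R -> R) :
  rect l w s t -> vsmooth_at X s t -> ex_derive (fun u => f u t) s ->
  (forall u v, rect l w u v -> lor (vd_t T u v) (X u v) = f u v) ->
  d_s f s t = k1 s t * lor (vd_t N s t) (X s t) + d_t k1 s t * lor (N s t) (X s t)
              + lor (vd_t T s t) (vd_s X s t).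
Proof.
  intros H HX Hf Hcoord. destruct (Hsm s t H) as (_ & HTs & _).
  rewrite (d_s_lor_segment (vd_t T) X f 0 l s t hl); [| apply H | | | exact Hf |].
  - rewrite (vd_s_vd_t_T s t H), lor_lin4, !lor_vzero_l. ring.
  - exact (proj1 (vsmooth_at_ex_vd _ _ _ (vsmooth_at_vd_t _ _ _ HTs))).
  - exact (proj1 (vsmooth_at_ex_vd _ _ _ HX)).
  - intros u Hu. exact (Hcoord u t (rect_segment s t u H Hu)).
Qed.

Lemma d_s_d_s_beta4 (s t : R) : rect l w s t ->
  d_s (d_s beta4) s t = k1 s t * lor (vd_t N s t) (B1 s t).
Proof.
  intros H. destruct (Hsm s t H) as (_ & _ & _ & HB1s & _ & _ & _ & _ & _ & _ & Hb4).
  rewrite (d_s_lor_vd_t_T s t B1 (d_s beta4) H HB1s) by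
    first [exact (proj1 (smooth_at_ex_derive _ _ _ (smooth_at_d_s _ _ _ Hb4)))
          | intros; apply lor_vd_t_T_B1; assumption].
  rewrite (HNB1 s t H), (HFB1 s t H), lor_vzero_r. ring.
Qed.

Lemma d_s_d_s_beta3 (s t : R) : rect l w s t ->
  d_s (d_s beta3) s t + d_s (fun a b => beta2 a b * k2 a b) s t =
  k1 s t * lor (vd_t N s t) (B2 s t)
  - k2 s t * (d_s beta2 s t + k1 s t * beta1 s t - k2 s t * beta4 s t).
Proof.
  intros H. destruct (Hsm s t H) as (_ & _ & _ & _ & HB2s & _ & Hk2 & _ & Hb2 & Hb3 & _).
  assert (Hb3s := proj1 (smooth_at_ex_derive _ _ _ (smooth_at_d_s _ _ _ Hb3))).
  assert (Hb2k2 : ex_derive (fun u => beta2 u t * k2 u t) s)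
    by (apply ex_derive_mult; [exact (proj1 (smooth_at_ex_derive _ _ _ Hb2))
                              | exact (proj1 (smooth_at_ex_derive _ _ _ Hk2))]).
  transitivity (d_s (fun a b => d_s beta3 a b + beta2 a b * k2 a b) s t).
  { symmetry. unfold d_s at 1. rewrite Derive_plus by assumption. reflexivity. }
  rewrite (d_s_lor_vd_t_T s t B2 (fun a b => d_s beta3 a b + beta2 a b * k2 a b) H HB2s).
  2: { apply (ex_derive_plus (fun u => d_s beta3 u t) (fun u => beta2 u t * k2 u t));
       assumption. }
  2: { intros u v Huv. apply lor_vd_t_T_B2; assumption. }
  rewrite (HNB2 s t H), (HFB2 s t H), lor_vscale, (lor_vd_t_T_N s t H). ring.
Qed.

End PartiallyNullVariation.

Theorem corollary3p7
  (l w : R) (hl : 0 < l) (hw : 0 < w)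
  (gamma T N B1 B2 : R -> R -> V4)
  (k1 k2 beta1 beta2 beta3 beta4 : R -> R -> R)
  (* smoothness of the family, the frame, the curvatures and the beta_i *)
  (Hsm : forall s t, rect l w s t ->
     vsmooth_at gamma s t /\ vsmooth_at T s t /\ vsmooth_at N s t /\
     vsmooth_at B1 s t /\ vsmooth_at B2 s t /\
     smooth_at k1 s t /\ smooth_at k2 s t /\
     smooth_at beta1 s t /\ smooth_at beta2 s t /\
     smooth_at beta3 s t /\ smooth_at beta4 s t)
  (* T = d gamma / ds *)
  (HT : forall s t, rect l w s t -> vd_s gamma s t = T s t)
  (* partially null Frenet frame *)
  (HTT : forall s t, rect l w s t -> lor (T s t) (T s t) = 1)
  (HNN : forall s t, rect l w s t -> lor (N s t) (N s t) = 1)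
  (HB1B1 : forall s t, rect l w s t -> lor (B1 s t) (B1 s t) = 0)
  (HB2B2 : forall s t, rect l w s t -> lor (B2 s t) (B2 s t) = 0)
  (HB1B2 : forall s t, rect l w s t -> lor (B1 s t) (B2 s t) = 1)
  (HTN : forall s t, rect l w s t -> lor (T s t) (N s t) = 0)
  (HTB1 : forall s t, rect l w s t -> lor (T s t) (B1 s t) = 0)
  (HTB2 : forall s t, rect l w s t -> lor (T s t) (B2 s t) = 0)
  (HNB1 : forall s t, rect l w s t -> lor (N s t) (B1 s t) = 0)
  (HNB2 : forall s t, rect l w s t -> lor (N s t) (B2 s t) = 0)
  (* Frenet equations, with k3 = 0 *)
  (HFT : forall s t, rect l w s t -> vd_s T s t = vscale (k1 s t) (N s t))
  (HFN : forall s t, rect l w s t ->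
     vd_s N s t = lin4 (- k1 s t) 0 (k2 s t) 0 (T s t) (N s t) (B1 s t) (B2 s t))
  (HFB1 : forall s t, rect l w s t -> vd_s B1 s t = vzero)
  (HFB2 : forall s t, rect l w s t -> vd_s B2 s t = vscale (- k2 s t) (N s t))
  (* inextensibility *)
  (Hinext : forall s t, rect l w s t ->
     Derive (fun v => lnorm (vd_s gamma s v)) t = 0)
  (* decomposition of the variation vector field *)
  (Hvar : forall s t, rect l w s t ->
     vd_t gamma s t =
     lin4 (beta1 s t) (beta2 s t) (beta3 s t) (beta4 s t) (T s t) (N s t) (B1 s t) (B2 s t)) :
  forall s t, rect l w s t ->
    let psi1 := lor (vd_t N s t) (B1 s t) in
    let psi2 := lor (vd_t N s t) (B2 s t) in
    psi1 <> 0 ->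
    k1 s t = / psi1 * d_s (d_s beta4) s t /\
    d_s (d_s beta3) s t + d_s (fun a b => beta2 a b * k2 a b) s t
      + d_s beta2 s t * k2 s t + beta1 s t * k1 s t * k2 s t
      - beta4 s t * (k2 s t) ^ 2 - psi2 * k1 s t = 0.
Proof.
  intros s t Hr psi1 psi2 Hpsi. unfold psi1, psi2 in *. split.
  - rewrite (d_s_d_s_beta4 hl Hsm HT HTT HNN HB1B1 HB2B2 HB1B2 HTN HTB1 HTB2 HNB1 HNB2
               HFT HFB1 Hvar s t Hr).
    field. exact Hpsi.
  - rewrite (d_s_d_s_beta3 hl Hsm HT HTT HNN HB1B1 HB2B2 HB1B2 HTN HTB1 HTB2 HNB1 HNB2
               HFT HFN HFB2 Hvar s t Hr).
    ring.
Qed.
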